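(* Let $G_1$ and $G_2$ be graphs, where $G_i$ has order $n_i$, minimum degree $\delta_i$, maximum degree $\Delta_i$ and independence number $\alpha(G_i)$, $i\in\{1,2\}$. Then for every integer $k\in\{1-\delta_1-\delta_2,\dots,\Delta_1+\Delta_2\}$, $$\phi_k^d(G_1\times G_2)\ge \alpha(G_1)\alpha(G_2)+\min\{n_1-\alpha(G_1),\,n_2-\alpha(G_2)\}.$$
   Context: All graphs are finite and simple. For a graph $G=(V,E)$, a set $S\subseteq V$ and $v\in V$, let $\delta_S(v)=|\{u\in S: uv\in E\}|$, $\delta(v)$ the degree of $v$, and $\overline{S}=V\setminus S$. For an integer $k$, a non-empty set $S\subseteq V$ is a defensive $k$-alliance if $\delta_S(v)\ge \delta_{\overline S}(v)+k$ for every $v\in S$. A set $X\subseteq V$ is a defensive $k$-alliance free set ($k$-daf set) if no defensive $k$-alliance $S$ satisfies $S\subseteq X$. $\phi_k^d(G)$ denotes the maximum cardinality of a $k$-daf set in $G$. The Cartesian product $G_1\times G_2$ of $G_1=(V_1,E_1)$, $G_2=(V_2,E_2)$ has vertex set $V_1\times V_2$, with $(a,b)$ adjacent to $(c,d)$ iff either $a=c$ and $bd\in E_2$, or $b=d$ and $ac\in E_1$. *)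

From HB Require Import structures.
From mathcomp Require Import all_boot all_order all_algebra.
Set Implicit Arguments. Unset Strict Implicit. Unset Printing Implicit Defensive.
Import Order.TTheory GRing.Theory Num.Theory.

Definition simple_graph (T : finType) (e : rel T) : Prop :=
  symmetric e /\ irreflexive e.

Definition deg_in (T : finType) (e : rel T) (S : {set T}) (v : T) : nat :=
  #|[set u in S | e v u]|.

Definition deg (T : finType) (e : rel T) (v : T) : nat := deg_in e setT v.

(* minimum / maximum degree (for an empty vertex set these are #|T| = 0 and 0) *)
Definition min_deg (T : finType) (e : rel T) : nat :=
  \big[minn/#|T|]_(v : T) deg e v.
Definition max_deg (T : finType) (e : rel T) : nat :=
  \max_(v : T) deg e v.

Definition independent (T : finType) (e : rel T) (A : {set T}) : bool :=
  [forall u in A, forall v in A, ~~ e u v].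
Definition alpha (T : finType) (e : rel T) : nat :=
  \max_(A : {set T} | independent e A) #|A|.

Definition def_alliance (T : finType) (e : rel T) (k : int) (S : {set T}) : bool :=
  (S != set0) &&
  [forall v in S, ((deg_in e (~: S) v)%:Z + k <= (deg_in e S v)%:Z)%R].

Definition k_daf (T : finType) (e : rel T) (k : int) (X : {set T}) : bool :=
  [forall S : {set T}, (S \subset X) ==> ~~ def_alliance e k S].

Definition phi_d (T : finType) (e : rel T) (k : int) : nat :=
  \max_(X : {set T} | k_daf e k X) #|X|.

Definition cart_prod (T1 T2 : finType) (e1 : rel T1) (e2 : rel T2) : rel (T1 * T2) :=
  fun x y => ((x.1 == y.1) && e2 x.2 y.2) || ((x.2 == y.2) && e1 x.1 y.1).

From HB Require Import structures.
From mathcomp Require Import all_boot all_order all_algebra.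
From mathcomp Require Import zify.
Import Order.TTheory GRing.Theory Num.Theory.
Set Implicit Arguments. Unset Strict Implicit.

(* Idea: an independent set X of a graph is k-alliance free as soon as
   every vertex of X has degree > -k. Indeed, if S is a non-empty subset
   of X and v is in S, then v has no neighbour in S and all its
   deg(v) neighbours outside S, so delta_S(v) = 0 < deg(v) + k =
   delta_(~S)(v) + k and S is not a defensive k-alliance. In G1 x G2
   every vertex has degree deg1 + deg2 >= delta1 + delta2 >= 1 - k.

   It remains to exhibit a large independent set of G1 x G2: take maximum
   independent sets A1, A2 of G1, G2 and, with m = min(n1 - |A1|, n2 - |A2|),
   injections f, g of {0..m-1} into the complements of A1, A2. Then
   A1 x A2 together with the "diagonal" {(f i, g i)} is independent, since
   adjacent vertices of a Cartesian product share a coordinate, and it has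
   alpha1 * alpha2 + m elements. *)

Section Graph.
Variables (T : finType) (e : rel T).

Lemma independentP (A : {set T}) :
  reflect {in A &, forall u v, ~~ e u v} (independent e A).
Proof.
apply: (iffP forallP) => [H u v uA vA | H u].
  by move/implyP/(_ uA)/forallP/(_ v)/implyP/(_ vA): (H u).
by apply/implyP => uA; apply/forallP => v; apply/implyP; exact: H.
Qed.

Lemma independentU (A B : {set T}) :
  independent e A -> independent e B ->
  {in A & B, forall u v, ~~ e u v && ~~ e v u} ->
  independent e (A :|: B).
Proof.
move=> /independentP iA /independentP iB AB; apply/independentP => u v.
rewrite !inE => /orP[uA|uB] /orP[vA|vB]; first exact: iA.
- by case/andP: (AB u v uA vB).
- by case/andP: (AB v u vA uB).
- exact: iB.
Qed.

Lemma alpha_attained : exists2 A : {set T}, independent e A & #|A| = alpha e.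
Proof.
have [|A iA maxA] := @eq_bigmax_cond _ (independent e) (fun A : {set T} => #|A|).
  by apply/card_gt0P; exists set0; apply/independentP => u v; rewrite inE.
by exists A; rewrite // /alpha maxA.
Qed.

Lemma min_deg_le (v : T) : min_deg e <= deg e v.
Proof.
rewrite /min_deg; have : v \in index_enum T by rewrite mem_index_enum.
elim: (index_enum T) => [//|a r IH]; rewrite inE big_cons.
case/orP => [/eqP -> | /IH le_rv]; first exact: geq_minl.
exact: leq_trans (geq_minr _ _) le_rv.
Qed.

Lemma deg_in_compl_independent (S : {set T}) (v : T) :
  independent e S -> v \in S -> deg_in e (~: S) v = deg e v.
Proof.
move=> /independentP iS vS; apply: eq_card => u; rewrite !inE.
by case: (boolP (u \in S)) => [uS|//]; rewrite (negbTE (iS v u vS uS)).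
Qed.

Lemma deg_in_independent (S : {set T}) (v : T) :
  independent e S -> v \in S -> deg_in e S v = 0.
Proof.
move=> /independentP iS vS; apply: eq_card0 => u; rewrite !inE.
by apply/andP => -[uS]; apply/negP; exact: iS.
Qed.

Lemma independent_k_daf (k : int) (X : {set T}) :
  independent e X -> {in X, forall v, (0 < (deg e v)%:Z + k)%R} -> k_daf e k X.
Proof.
move=> iX degX; apply/forallP => S; apply/implyP => SX.
have iS : independent e S.
  by apply/independentP => u v uS vS; apply: (independentP _ iX); exact: (subsetP SX).
rewrite /def_alliance negb_and; have [->|[v vS]] := set_0Vmem S; first by rewrite eqxx.
apply/orP; right; rewrite negb_forall; apply/existsP; exists v.
rewrite vS /= deg_in_compl_independent // deg_in_independent // -ltNge.
exact: degX (subsetP SX v vS).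
Qed.

Lemma k_daf_le_phi_d (k : int) (X : {set T}) : k_daf e k X -> #|X| <= phi_d e k.
Proof. by move=> kX; apply: (@leq_bigmax_cond _ (k_daf e k) (fun X => #|X|)). Qed.

End Graph.

Lemma injection_into (T : finType) (B : {set T}) (m : nat) :
  m <= #|B| -> exists2 f : 'I_m -> T, injective f & forall i, f i \in B.
Proof.
move=> le_mB; exists (fun i => enum_val (widen_ord le_mB i)) => [i j|i].
  by move/enum_val_inj/(congr1 val) => /= /val_inj.
exact: enum_valP.
Qed.

Section CartesianProduct.
Variables (T1 T2 : finType) (e1 : rel T1) (e2 : rel T2).
Local Notation e := (cart_prod e1 e2).

Lemma cart_prod_adj_coord (x y : T1 * T2) : e x y -> (x.1 == y.1) || (x.2 == y.2).
Proof. by case/orP => /andP[-> _]; rewrite ?orbT. Qed.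

Lemma independent_setX (A1 : {set T1}) (A2 : {set T2}) :
  independent e1 A1 -> independent e2 A2 -> independent e (setX A1 A2).
Proof.
move=> /independentP iA1 /independentP iA2; apply/independentP.
move=> [u1 u2] [v1 v2]; rewrite !inE /= => /andP[u1A u2A] /andP[v1A v2A].
by rewrite /cart_prod /= (negbTE (iA1 _ _ u1A v1A)) (negbTE (iA2 _ _ u2A v2A)) !andbF.
Qed.

(* The graph of a pair of injections is independent in G1 x G2: distinct
   points differ in both coordinates. *)
Lemma independent_diagonal (I : finType) (f : I -> T1) (g : I -> T2) :
  irreflexive e1 -> irreflexive e2 -> injective f -> injective g ->
  independent e [set (f i, g i) | i : I].
Proof.
move=> irr1 irr2 inj_f inj_g; apply/independentP => _ _ /imsetP[i _ ->] /imsetP[j _ ->].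
have [<-|neq_ij] := eqVneq i j; first by rewrite /cart_prod /= irr1 irr2 !andbF.
apply/negP => /cart_prod_adj_coord /= /orP[/eqP/inj_f|/eqP/inj_g] eq_ij.
all: by rewrite eq_ij eqxx in neq_ij.
Qed.

(* Degrees add up in a Cartesian product: the neighbours of (v1, v2) are
   the (x, v2) with x ~ v1 and the (v1, y) with y ~ v2, and these two
   families are disjoint since v1 is not adjacent to itself. *)
Lemma deg_cart_prod (v : T1 * T2) :
  irreflexive e1 -> deg e v = deg e1 v.1 + deg e2 v.2.
Proof.
move=> irr1; case: v => v1 v2.
rewrite /deg /deg_in.
pose N1 := [set (x, v2) | x in [set x in setT | e1 v1 x]].
pose N2 := [set (v1, y) | y in [set y in setT | e2 v2 y]].
have -> : [set u in setT | e (v1, v2) u] = N1 :|: N2.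
  apply/setP => -[u1 u2]; rewrite !inE /cart_prod /=.
  apply/idP/idP => [/orP[/andP[/eqP <- adj]|/andP[/eqP <- adj]]|/orP[]/imsetP[x]].
  - by apply/orP; right; apply/imsetP; exists u2; rewrite ?inE.
  - by apply/orP; left; apply/imsetP; exists u1; rewrite ?inE.
  - by rewrite !inE => adj [-> ->]; rewrite eqxx adj orbT.
  - by rewrite !inE => adj [-> ->]; rewrite eqxx adj.
have disj : [disjoint N1 & N2].
  apply/pred0P => -[u1 u2] /=; apply/negP => /andP[/imsetP[x adj [-> ->]]].
  by case/imsetP => y _ [eq_v1 _]; move: adj; rewrite eq_v1 !inE irr1.
rewrite cardsU (disjoint_setI0 disj) cards0 subn0.
by rewrite !card_imset // => x y [].
Qed.

Lemma independent_cart_prod_large :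
  irreflexive e1 -> irreflexive e2 ->
  exists2 X : {set T1 * T2}, independent e X &
    #|X| = alpha e1 * alpha e2 + minn (#|T1| - alpha e1) (#|T2| - alpha e2).
Proof.
move=> irr1 irr2.
have [A1 iA1 cA1] := alpha_attained e1; have [A2 iA2 cA2] := alpha_attained e2.
set m := minn _ _.
have [f inj_f fA1] : exists2 f : 'I_m -> T1, injective f & forall i, f i \in ~: A1.
  by apply: injection_into; rewrite /m -cA1 -(cardsC A1) addKn geq_minl.
have [g inj_g gA2] : exists2 g : 'I_m -> T2, injective g & forall i, g i \in ~: A2.
  by apply: injection_into; rewrite /m -cA2 -(cardsC A2) addKn geq_minr.
pose D := [set (f i, g i) | i : 'I_m].
have apart u i : u \in setX A1 A2 -> (u.1 != f i) && (u.2 != g i).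
  rewrite inE => /andP[u1A u2A]; apply/andP; split.
  - by apply: contraTneq u1A => ->; rewrite -in_setC.
  - by apply: contraTneq u2A => ->; rewrite -in_setC.
exists (setX A1 A2 :|: D).
  apply: independentU; [exact: independent_setX | exact: independent_diagonal |].
  move=> u _ uX /imsetP[i _ ->]; have /andP[ne1 ne2] := apart u i uX.
  by apply/andP; split; apply/negP => /cart_prod_adj_coord /=;
    rewrite ?(eq_sym (f i)) ?(eq_sym (g i)) (negbTE ne1) (negbTE ne2).
rewrite cardsU cardsX cA1 cA2 card_imset ?card_ord; last by move=> i j [/inj_f].
suff -> : setX A1 A2 :&: D = set0 by rewrite cards0 subn0.
apply/setP => u; rewrite in_setI in_set0; apply/negP => /andP[uX /imsetP[i _ eq_u]].
by move: (apart u i uX); rewrite eq_u !eqxx.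
Qed.

End CartesianProduct.

Theorem mainTheorem1 (T1 T2 : finType) (e1 : rel T1) (e2 : rel T2)
  (G1 : simple_graph e1) (G2 : simple_graph e2) (k : int) :
  (1 - (min_deg e1)%:Z - (min_deg e2)%:Z <= k)%R ->
  (k <= (max_deg e1)%:Z + (max_deg e2)%:Z)%R ->
  alpha e1 * alpha e2 + minn (#|T1| - alpha e1) (#|T2| - alpha e2)
    <= phi_d (cart_prod e1 e2) k.
Proof.
move=> k_lb _; have [[_ irr1] [_ irr2]] := (G1, G2).
have [X iX <-] := independent_cart_prod_large irr1 irr2.
apply: k_daf_le_phi_d; apply: independent_k_daf => // v _.
rewrite deg_cart_prod //.
have := min_deg_le e1 v.1; have := min_deg_le e2 v.2; move: k_lb; lia.
Qed.
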